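(* Let $\tilde\tau\in(0,1/2)$ and $R=2^{[1-H(\tau')]N/2}$, where $\tau'=(\tau N-2)/(N-1)$. Let $\mathcal N_R$ be a neighborhood of radius $R$ centered at an arbitrary vertex, and let $A$ be the event that for every $v\in\mathcal N_R$, a $+1$ agent would be happy at the location of $v$ at time $0$. Then $P(A)\to1$ as $N\to\infty$.
   Context: Setting: $G_n$ is the $n\times n$ torus grid, $w$ is a positive integer, and $N=(2w+1)^2$. $\mathcal N(v)$ is the set of vertices within $\ell_\infty$ distance $w$ of $v$, and a neighborhood of radius $\rho$ is defined analogously. In the initial configuration (time $0$), each vertex holds an agent of type $\pm1$, independently with probability $1/2$ each. The intolerance is $\tau=\lceil\tilde\tau N\rceil/N$, and $H$ is the binary entropy function. ''A $+1$ agent would be happy at the location of $v$'' means: if the agent at $v$ were replaced by an agent of type $+1$, with all other agents unchanged, then at least a fraction $\tau$ of the agents in $\mathcal N(v)$ would be of type $+1$. *)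

From Stdlib Require Import Reals ZArith.
From mathcomp Require Import all_boot.

Set Implicit Arguments.
Unset Strict Implicit.
Unset Printing Implicit Defensive.

Definition vert (n : nat) : Type := ('I_n * 'I_n)%type.

Definition cdist (n : nat) (a b : 'I_n) : nat :=
  minn ((a + n - b) %% n) ((b + n - a) %% n).

Definition tdist (n : nat) (u v : vert n) : nat :=
  maxn (cdist u.1 v.1) (cdist u.2 v.2).

(* Configurations: true = agent of type +1, false = agent of type -1. *)
Definition config (n : nat) := {ffun vert n -> bool}.

Definition nbhd (n w : nat) (v : vert n) : {set vert n} :=
  [set u | (tdist u v <= w)%N].

Definition Nsize (w : nat) : nat := ((2 * w + 1) ^ 2)%N.

Local Open Scope R_scope.

Definition Rle_b (x y : R) : bool := if Rle_dec x y then true else false.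

Definition Rceil (x : R) : Z := (- Int_part (- x))%Z.

Definition tau (tt : R) (w : nat) : R :=
  IZR (Rceil (tt * INR (Nsize w))) / INR (Nsize w).

(* A +1 agent would be happy at the location of v: replacing the agent at v
   by a +1 agent, at least a fraction tau of the agents in N(v) are +1. *)
Definition happy_plus (n w : nat) (tt : R) (s : config n) (v : vert n) : bool :=
  Rle_b (tau tt w * INR #|nbhd w v|)
        (INR #|[set u in nbhd w v | (u == v) || s u]|).

(* Binary entropy (base 2). Note ln x = 0 for x <= 0 in Stdlib, so 0 log 0 = 0. *)
Definition log2 (x : R) : R := ln x / ln 2.
Definition Hbin (p : R) : R := - p * log2 p - (1 - p) * log2 (1 - p).

Definition tau' (tt : R) (w : nat) : R :=
  (tau tt w * INR (Nsize w) - 2) / (INR (Nsize w) - 1).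

Definition Rrad (tt : R) (w : nat) : R :=
  Rpower 2 ((1 - Hbin (tau' tt w)) * INR (Nsize w) / 2).

Definition eventA (n w : nat) (tt : R) (v0 : vert n) (s : config n) : bool :=
  [forall v : vert n, Rle_b (INR (tdist v v0)) (Rrad tt w) ==> happy_plus w tt s v].

(* Probability under the uniform (i.i.d. fair) initial configuration. *)
Definition probA (n w : nat) (tt : R) (v0 : vert n) : R :=
  INR #|[set s : config n | eventA w tt v0 s]| / INR #|{: config n}|.

(* Union bound over the at most [(2R + 3)^2] sites of the radius-[R] ball.  A [+1]
   agent would be unhappy at [v] only if at most [k = tau N - 2] of the other
   [m = N - 1] agents of [N(v)] are [+1], which has probability
   [2^-m sum_(j <= k) C(m, j)].  Below the mean the binomial coefficients grow
   geometrically, so this tail is at most [(1 - tau~) / (1 - 2 tau~) C(m, k)], and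
   Stirling's formula with explicit constants gives
   [C(m, k) <= 2^(m H(k/m)) sqrt(2 / k)].  As [tau' = k / m], the factor
   [R^2 = 2^((1 - H(k/m)) N)] cancels the entropy factor up to [2], so
   [P(not A) = O(1 / sqrt k) = O(1 / sqrt N)]. *)

From Stdlib Require Import Reals Lra Lia ZArith.
From mathcomp Require Import all_boot.
From Coquelicot Require Import Coquelicot.
From mathcomp Require Import zify.

Set Implicit Arguments.
Unset Strict Implicit.
Unset Printing Implicit Defensive.

Local Open Scope R_scope.

Lemma le_derive_nonneg (f f' : R -> R) (x : R) :
  0 <= x -> (forall c, 0 <= c <= x -> derivable_pt_lim f c (f' c)) ->
  (forall c, 0 <= c <= x -> 0 <= f' c) -> f 0 <= f x.
Proof.
move=> Hx Hd Hp; have [->|Hne] := Req_dec x 0; first lra.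
have [c [Hc1 Hc2]] := MVT_cor2 f f' 0 x ltac:(lra) Hd.
have : 0 <= f' c by apply: Hp; lra.
nra.
Qed.

Lemma ln1p_ge x : 0 <= x -> 2 * x / (2 + x) <= ln (1 + x).
Proof.
move=> Hx.
pose f t := ln (1 + t) - 2 * t / (2 + t).
have f0 : f 0 = 0 by rewrite /f Rplus_0_r ln_1 /Rdiv; ring.
suff : f 0 <= f x by move: f0; rewrite /f; lra.
apply: (@le_derive_nonneg f (fun t => / (1 + t) - 4 / ((2 + t) * (2 + t)))) => // c Hc.
- by apply is_derive_Reals; rewrite /f; auto_derive; [lra | field; lra].
- have -> : / (1 + c) - 4 / ((2 + c) * (2 + c)) = c * c / ((1 + c) * (2 + c) * (2 + c))
    by field; lra.
  apply: Rdiv_le_0_compat; first nra.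
  apply: Rmult_lt_0_compat; nra.
Qed.

Lemma ln1p_le x : 0 <= x -> ln (1 + x) <= x - x * x / 2 + x * x * x / 3.
Proof.
move=> Hx.
pose f t := t - t * t / 2 + t * t * t / 3 - ln (1 + t).
have f0 : f 0 = 0 by rewrite /f Rplus_0_r ln_1 /Rdiv; ring.
suff : f 0 <= f x by move: f0; rewrite /f; lra.
apply: (@le_derive_nonneg f (fun t => t * t * t / (1 + t))) => // c Hc.
- by apply is_derive_Reals; rewrite /f; auto_derive; [lra | field; lra].
- by apply: Rdiv_le_0_compat; [apply: Rmult_le_pos; nra | lra].
Qed.

Lemma ln_ge_1_inv x : 0 < x -> 1 - / x <= ln x.
Proof.
move=> Hx; have Hix := Rinv_0_lt_compat _ Hx.
have := exp_ineq1_le (ln (/ x)); rewrite exp_ln // ln_Rinv //; lra.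
Qed.

Lemma exp_le_compat x y : x <= y -> exp x <= exp y.
Proof. by case=> [/exp_increasing/Rlt_le | ->]; last exact: Rle_refl. Qed.

(** * Stirling's formula with explicit constants *)

Definition stirling_rem (n : nat) : R :=
  ln (INR n`!) + INR n - (INR n + / 2) * ln (INR n).

Lemma INR_fact_gt0 n : 0 < INR n`!.
Proof. by apply: lt_0_INR; apply/ltP; exact: fact_gt0. Qed.

Lemma stirling_rem_step n : (1 <= n)%N ->
  stirling_rem n - stirling_rem n.+1 = (INR n + / 2) * ln (1 + / INR n) - 1.
Proof.
move=> Hn; have Hp : 0 < INR n by apply: lt_0_INR; lia.
have Hlnf : ln (INR n.+1`!) = ln (INR n.+1) + ln (INR n`!).
  by rewrite factS -multE mult_INR ln_mult //; [apply: lt_0_INR; lia | exact: INR_fact_gt0].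
have HlnS : ln (INR n.+1) = ln (INR n) + ln (1 + / INR n).
  rewrite -ln_mult //; last by have := Rinv_0_lt_compat _ Hp; lra.
  by congr ln; rewrite S_INR; field; lra.
by rewrite /stirling_rem Hlnf HlnS S_INR; ring.
Qed.

Lemma stirling_rem_step_bounds n : (1 <= n)%N ->
  0 <= stirling_rem n - stirling_rem n.+1 <= / (2 * INR n) - / (2 * INR n.+1).
Proof.
move=> Hn; rewrite stirling_rem_step // S_INR.
have Hn1 : 1 <= INR n by apply: (le_INR 1); lia.
set x := / INR n.
have Hx0 : 0 < x by apply: Rinv_0_lt_compat; lra.
have Hx1 : x <= 1 by rewrite /x -Rinv_1; apply: Rinv_le_contravar; lra.
have -> : INR n = / x by rewrite /x Rinv_inv.
have Hw : 0 <= / x + / 2 by have := Rinv_0_lt_compat _ Hx0; lra.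
have L := ln1p_ge (Rlt_le _ _ Hx0); have U := ln1p_le (Rlt_le _ _ Hx0).
split.
- have -> : 0 = (/ x + / 2) * (2 * x / (2 + x)) - 1 by field; lra.
  nra.
- apply: (Rle_trans _ ((/ x + / 2) * (x - x * x / 2 + x * x * x / 3) - 1)); first nra.
  have -> : (/ x + / 2) * (x - x * x / 2 + x * x * x / 3) - 1 = x * x / 12 + x * x * x / 6
    by field; lra.
  have -> : / (2 * / x) - / (2 * (/ x + 1)) = x * x / (2 * (1 + x)) by field; lra.
  apply: (Rle_trans _ (x * x / 4)); first nra.
  by apply: Rmult_le_compat_l; [nra | apply: Rinv_le_contravar; lra].
Qed.

(* The lower bound is carried as [/2 + /(2n)] so that the telescoping step closes. *)
Lemma stirling_rem_bounds n : (1 <= n)%N -> / 2 <= stirling_rem n <= 1.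
Proof.
move=> Hn.
suff [H1 H2] : stirling_rem n <= 1 /\ / 2 + / (2 * INR n) <= stirling_rem n.
  have Hn1 : 1 <= INR n by apply: (le_INR 1); lia.
  have := Rinv_0_lt_compat (2 * INR n) ltac:(lra); lra.
elim: n Hn => [//|[|n] IH] _.
  by rewrite /stirling_rem /= Rmult_1_r ln_1; lra.
have [H1 H2] := IH isT; have := @stirling_rem_step_bounds n.+1 isT; lra.
Qed.

(** * Entropy and binomial coefficients *)

Definition ent (K L : R) : R := (K + L) * ln (K + L) - K * ln K - L * ln L.

Section Entropy.
Variables K L : R.
Hypotheses (HK : 0 < K) (HL : 0 < L).

Lemma ent_ge0 : 0 <= ent K L.
Proof.
have HlK : ln K <= ln (K + L) by apply: ln_le; lra.
have HlL : ln L <= ln (K + L) by apply: ln_le; lra.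
rewrite /ent; nra.
Qed.

(* Gibbs' inequality against the uniform split [(K + L) / 2]. *)
Lemma ent_le : ent K L <= (K + L) * ln 2.
Proof.
have gibbs x : 0 < x -> x - (K + L) / 2 <= x * (ln 2 + ln x - ln (K + L)).
  move=> Hx; have H2x : 0 < 2 * x / (K + L) by apply: Rdiv_lt_0_compat; lra.
  have := ln_ge_1_inv H2x; rewrite ln_div ?ln_mult //; try lra.
  have -> : / (2 * x / (K + L)) = (K + L) / (2 * x) by field; lra.
  move=> /(Rmult_le_compat_l x _ _ (Rlt_le _ _ Hx)).
  by have -> : x * (1 - (K + L) / (2 * x)) = x - (K + L) / 2 by field; lra.
have := gibbs K HK; have := gibbs L HL; rewrite /ent; nra.
Qed.

Lemma Hbin_ent : Hbin (K / (K + L)) * ln 2 = ent K L / (K + L).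
Proof.
have Hl2 : 0 < ln 2 by have := ln_lt_2; lra.
rewrite /Hbin /log2.
have -> : 1 - K / (K + L) = L / (K + L) by field; lra.
rewrite !ln_div /ent; try lra.
by field; lra.
Qed.

End Entropy.

Lemma INR_subn_split m k : (k < m)%N -> INR m = INR k + INR (m - k).
Proof. by move=> Hkm; rewrite minus_INR; [ring | apply/leP; exact: ltnW]. Qed.

Lemma binomial_le_exp_ent m k : (1 <= k)%N -> (k < m)%N ->
  INR 'C(m, k) <= exp (ent (INR k) (INR (m - k))) * sqrt (INR m / (INR k * INR (m - k))).
Proof.
move=> Hk Hkm.
have Hm := INR_subn_split Hkm.
have HK : 0 < INR k by apply: lt_0_INR; lia.
have HL : 0 < INR (m - k) by apply: lt_0_INR; lia.
have HC : 0 < INR 'C(m, k) by apply: lt_0_INR; apply/ltP; rewrite bin_gt0 ltnW.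
have Hfact : ln (INR m`!) = ln (INR 'C(m, k)) + ln (INR k`!) + ln (INR (m - k)`!).
  have Hfk := INR_fact_gt0 k; have Hfmk := INR_fact_gt0 (m - k).
  rewrite -(bin_fact (ltnW Hkm)) -!multE !mult_INR !ln_mult //;
    [ring | exact: Rmult_lt_0_compat].
have := stirling_rem_bounds (leq_trans Hk (ltnW Hkm)).
have := stirling_rem_bounds Hk.
have := @stirling_rem_bounds (m - k) ltac:(lia).
rewrite /stirling_rem Hfact => Smk Sk Sm.
rewrite -(exp_ln (INR 'C(m, k))) // -Rpower_sqrt; last first.
  by apply: Rdiv_lt_0_compat; [lra | apply: Rmult_lt_0_compat].
rewrite /Rpower -exp_plus; apply: exp_le_compat.
rewrite ln_div ?ln_mult /ent -?Hm //; [lra | lra | exact: Rmult_lt_0_compat].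
Qed.

Lemma binomial_le_exp_ent_sqrt m k : (1 <= k)%N -> (2 * k <= m)%N ->
  INR 'C(m, k) <= exp (ent (INR k) (INR (m - k))) * sqrt (2 / INR k).
Proof.
move=> Hk H2km; have Hkm : (k < m)%N by lia.
have HK : 0 < INR k by apply: lt_0_INR; lia.
have HL : INR k <= INR (m - k) by apply/le_INR/leP; lia.
apply: Rle_trans (binomial_le_exp_ent Hk Hkm) _.
apply: Rmult_le_compat_l; first exact/Rlt_le/exp_pos.
apply: sqrt_le_1_alt; rewrite (INR_subn_split Hkm).
have -> : (INR k + INR (m - k)) / (INR k * INR (m - k)) =
          (INR k / INR (m - k) + 1) / INR k by field; lra.
apply: Rmult_le_compat_r; first exact/Rlt_le/Rinv_0_lt_compat.
suff : INR k / INR (m - k) <= 1 by lra.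
by apply: (Rmult_le_reg_r (INR (m - k))); [lra | rewrite /Rdiv Rmult_assoc Rinv_l; lra].
Qed.

Lemma binomial_step_ge m j tt : 0 < tt -> (j < m)%N -> INR j.+1 <= tt * INR m ->
  (1 - tt) * INR 'C(m, j) <= tt * INR 'C(m, j.+1).
Proof.
move=> Htt Hjm Hj.
have Hmj : INR (m - j) = INR m - INR j by rewrite minus_INR //; apply/leP; exact: ltnW.
have Hrec : (INR j + 1) * INR 'C(m, j.+1) = (INR m - INR j) * INR 'C(m, j).
  by rewrite -S_INR -Hmj -!mult_INR !multE mul_bin_left.
rewrite S_INR in Hj.
have Hpos : 0 < INR m - INR j by have := lt_INR _ _ (ltP Hjm); lra.
have := pos_INR 'C(m, j); have := pos_INR 'C(m, j.+1) => HC1 HC0.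
apply: (Rmult_le_reg_r (INR m - INR j)) => //.
have : (1 - tt) * (INR j + 1) <= tt * (INR m - INR j) by nra.
nra.
Qed.

(* Below [tt * m] consecutive binomial coefficients grow at least geometrically
   with ratio [(1 - tt) / tt > 1], so the lower tail is dominated by its last term. *)
Lemma binomial_partial_sum_le m j tt : 0 < tt < / 2 -> (j < m)%N -> INR j <= tt * INR m ->
  (1 - 2 * tt) * INR (\sum_(i < j.+1) 'C(m, i)) <= (1 - tt) * INR 'C(m, j).
Proof.
move=> Htt; elim: j => [|j IH] Hjm Hj.
  by rewrite big_ord_recr big_ord0 bin0 /=; lra.
rewrite big_ord_recr /=.
have := IH (ltnW Hjm) ltac:(rewrite S_INR in Hj; lra).
have := binomial_step_ge (proj1 Htt) (ltnW Hjm) Hj.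
have := pos_INR 'C(m, j.+1).
set S := \sum_(i < j.+1) _; rewrite -plusE plus_INR.
nra.
Qed.

Definition radius (k m : nat) : R := Rpower 2 ((1 - Hbin (INR k / INR m)) * INR m.+1 / 2).

Lemma exp_ent_le m k : (1 <= k)%N -> (k < m)%N -> exp (ent (INR k) (INR (m - k))) <= 2 ^ m.
Proof.
move=> Hk Hkm; rewrite -Rpower_pow; last lra.
apply: exp_le_compat; rewrite (INR_subn_split Hkm).
by apply: ent_le; apply: lt_0_INR; lia.
Qed.

(* [radius k m ^ 2 = 2 ^ ((1 - H) (m + 1))] while [exp (ent k (m - k)) = 2 ^ (H m)]. *)
Lemma radius_sq_exp_ent_le m k : (1 <= k)%N -> (k < m)%N ->
  radius k m ^ 2 * exp (ent (INR k) (INR (m - k))) <= 2 * 2 ^ m.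
Proof.
move=> Hk Hkm.
have HK : 0 < INR k by apply: lt_0_INR; lia.
have HL : 0 < INR (m - k) by apply: lt_0_INR; lia.
have Hm := INR_subn_split Hkm.
have Hent : ent (INR k) (INR (m - k)) = Hbin (INR k / INR m) * ln 2 * INR m.
  by rewrite Hm Hbin_ent //; field; lra.
have Hh : 0 <= Hbin (INR k / INR m) * ln 2.
  by rewrite Hm Hbin_ent //; apply: Rdiv_le_0_compat; [exact: ent_ge0 | lra].
change (2 * 2 ^ m) with (2 ^ m.+1); rewrite -[2 ^ m.+1]Rpower_pow; last lra.
rewrite /radius /Rpower S_INR (_ : forall x, x ^ 2 = x * x); last by move=> x; ring.
rewrite -!exp_plus Hent.
apply: exp_le_compat; nra.
Qed.

Lemma radius_binomial_tail_le m k tt : 0 < tt < / 2 -> (1 <= k)%N -> INR k <= tt * INR m ->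
  (2 * radius k m + 3) ^ 2 * INR (\sum_(j < k.+1) 'C(m, j)) / 2 ^ m
  <= 34 * (1 - tt) / (1 - 2 * tt) * sqrt (2 / INR k).
Proof.
move=> Htt Hk HkM.
have HK : 0 < INR k by apply: lt_0_INR; lia.
have H2km : (2 * k <= m)%N.
  by apply/leP/INR_le; rewrite mult_INR (_ : INR 2 = 2) //; nra.
have Hkm : (k < m)%N by lia.
have HE := exp_ent_le Hk Hkm.
have HrE := radius_sq_exp_ent_le Hk Hkm.
set E := exp (ent (INR k) (INR (m - k))).
set S := INR (\sum_(j < k.+1) 'C(m, j)).
set q := sqrt (2 / INR k).
set r := radius k m.
have HP : 0 < 2 ^ m by apply: pow_lt; lra.
have HE0 : 0 < E by apply: exp_pos.
have HS0 : 0 <= S by apply: pos_INR.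
have Hq0 : 0 <= q by apply: sqrt_pos.
have HC := binomial_le_exp_ent_sqrt Hk H2km.
have HS := binomial_partial_sum_le Htt Hkm HkM.
have Hsq : (2 * r + 3) ^ 2 <= 8 * r ^ 2 + 18 by have := pow2_ge_0 (2 * r - 3); nra.
have Hsum : (2 * r + 3) ^ 2 * ((1 - 2 * tt) * S) <= (1 - tt) * q * (8 * (r ^ 2 * E) + 18 * E).
  apply: (Rle_trans _ ((8 * r ^ 2 + 18) * ((1 - tt) * (E * q)))); last by right; ring.
  apply: Rmult_le_compat => //; first exact: pow2_ge_0.
    by apply: Rmult_le_pos => //; lra.
  by apply: (Rle_trans _ _ _ HS); apply: Rmult_le_compat_l => //; lra.
apply: (Rmult_le_reg_r (2 ^ m * (1 - 2 * tt))); first by apply: Rmult_lt_0_compat; lra.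
have -> : (2 * r + 3) ^ 2 * S / 2 ^ m * (2 ^ m * (1 - 2 * tt)) =
          (2 * r + 3) ^ 2 * ((1 - 2 * tt) * S) by field; lra.
have -> : 34 * (1 - tt) / (1 - 2 * tt) * q * (2 ^ m * (1 - 2 * tt)) =
          (1 - tt) * q * (34 * 2 ^ m) by field; lra.
apply: (Rle_trans _ _ _ Hsum); apply: Rmult_le_compat_l; first by apply: Rmult_le_pos; lra.
by move: HE HrE; rewrite -/E -/r; lra.
Qed.

(** * Balls in the torus *)

Local Close Scope R_scope.

Lemma cdist_leE n (a b : 'I_n) r :
  (cdist b a <= r) = ((b + n - a) %% n <= r) || (n <= (b + n - a) %% n + r).
Proof.
rewrite /cdist; have Ha := ltn_ord a; have Hb := ltn_ord b.
case: (leqP a b) => Hab.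
- have -> : b + n - a = (b - a) + n by lia.
  rewrite modnDr modn_small; last by lia.
  case: (eqVneq (a : nat) b) => Heq.
  + have -> : a + n - b = n by lia.
    rewrite modnn; lia.
  + have -> : a + n - b = n - (b - a) by lia.
    rewrite modn_small; lia.
- have -> : a + n - b = (a - b) + n by lia.
  rewrite modnDr (modn_small (m := a - b)); last by lia.
  rewrite modn_small; lia.
Qed.

Lemma cdistxx n (a : 'I_n) : cdist a a = 0.
Proof. by rewrite /cdist addKn modnn minnn. Qed.

Lemma card_set_ord_sum n (p : nat -> bool) :
  #|[set x : 'I_n | p x]| = \sum_(0 <= i < n) (if p i then 1 else 0).
Proof.
by rewrite -sum1_card big_mkcond /= big_mkord; apply: eq_bigr => i _; rewrite inE.
Qed.

Lemma sum_indicator_const a b (p : nat -> bool) c :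
  (forall i, a <= i < b -> p i = c) ->
  \sum_(a <= i < b) (if p i then 1 else 0) = if c then b - a else 0.
Proof.
move=> Hp; rewrite (@eq_big_nat _ _ _ a b _ (fun _ => if c then 1 else 0)); last first.
  by move=> i /Hp ->.
by rewrite sum_nat_const_nat; case: c {Hp} => /=; lia.
Qed.

Lemma card_ord_window n r : 2 * r + 1 <= n ->
  #|[set x : 'I_n | (x <= r) || (n <= x + r)]| = 2 * r + 1.
Proof.
move=> Hn; rewrite (card_set_ord_sum n (fun x => (x <= r) || (n <= x + r))).
rewrite (@big_cat_nat _ _ _ r.+1) /=; [|lia|lia].
rewrite (@big_cat_nat _ _ _ (n - r) r.+1 n) /=; [|lia|lia].
rewrite (@sum_indicator_const 0 r.+1 _ true); last by move=> i /andP[_ Hi]; lia.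
rewrite (@sum_indicator_const r.+1 (n - r) _ false); last by move=> i /andP[Hi1 Hi2]; lia.
rewrite (@sum_indicator_const (n - r) n _ true); last by move=> i /andP[Hi1 Hi2]; lia.
lia.
Qed.

Definition ball n (a : 'I_n) r : {set 'I_n} := [set b : 'I_n | cdist b a <= r].
Arguments ball {n}.

(* Rotating by [-a] maps the ball around [a] onto the window around [0]. *)
Lemma card_ball n (a : 'I_n) r : 2 * r + 1 <= n -> #|ball a r| = 2 * r + 1.
Proof.
move=> Hn; have n_gt0 : 0 < n by have := ltn_ord a; lia.
pose rot (b : 'I_n) : 'I_n := Ordinal (ltn_pmod (b + n - a) n_gt0).
have rot_inj : injective rot.
  move=> b c /(congr1 val) /=; have Ha := ltn_ord a.
  have -> : b + n - a = b + (n - a) by lia.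
  have -> : c + n - a = c + (n - a) by lia.
  by move/eqP; rewrite eqn_modDr !modn_small // => /eqP/val_inj.
have -> : ball a r = rot @^-1: [set x : 'I_n | (x <= r) || (n <= x + r)].
  by apply/setP=> b; rewrite !inE cdist_leE.
by rewrite card_preimset // card_ord_window.
Qed.

Lemma card_ball_le n (a : 'I_n) r : #|ball a r| <= 2 * r + 1.
Proof.
have [/(card_ball a)-> // | Hn] := leqP (2 * r + 1) n.
by apply: leq_trans (ltnW Hn); rewrite -[X in _ <= X](card_ord n); exact: max_card.
Qed.

Lemma tdist_leE n (u v : vert n) r :
  (tdist u v <= r) = (u.1 \in ball v.1 r) && (u.2 \in ball v.2 r).
Proof. by rewrite /tdist !inE geq_max. Qed.

Lemma tball_setX n (v : vert n) r :
  [set u : vert n | tdist u v <= r] = setX (ball v.1 r) (ball v.2 r).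
Proof. by apply/setP => -[x y]; rewrite in_set tdist_leE in_setX. Qed.

Lemma card_nbhd n w (v : vert n) : 2 * w + 1 <= n -> #|nbhd w v| = Nsize w.
Proof. by move=> Hn; rewrite /nbhd tball_setX cardsX !card_ball // /Nsize mulnn. Qed.

Lemma mem_nbhd_self n w (v : vert n) : v \in nbhd w v.
Proof. by rewrite inE /tdist !cdistxx. Qed.

Lemma card_tball_le n (v : vert n) r :
  #|[set u : vert n | tdist u v <= r]| <= (2 * r + 1) * (2 * r + 1).
Proof. by rewrite tball_setX cardsX leq_mul ?card_ball_le. Qed.

(** * Counting configurations *)

Lemma card_bigcup_le (I T : finType) (A : {pred I}) (F : I -> {set T}) :
  #|\bigcup_(i in A) F i| <= \sum_(i in A) #|F i|.
Proof.
apply: (big_ind2 (fun (X : {set T}) a => #|X| <= a)) => [|X a Y b HX HY|//].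
  by rewrite cards0.
by apply: leq_trans (leq_card_setU X Y) _; exact: leq_add.
Qed.

Lemma card_small_subsets_le (T : finType) (S : {set T}) k :
  #|[set B : {set T} | (B \subset S) && (#|B| <= k)]| <= \sum_(j < k.+1) 'C(#|S|, j).
Proof.
elim: k => [|k IH].
  rewrite big_ord_recr big_ord0 /= -(cards_draws S 0); apply: subset_leq_card.
  by apply/subsetP => B; rewrite !inE leqn0 => /andP[-> ->].
rewrite big_ord_recr /=.
apply: leq_trans (_ : #|[set B : {set T} | (B \subset S) && (#|B| <= k)] :|:
                      [set B : {set T} | (B \subset S) & #|B| == k.+1]| <= _).
  apply: subset_leq_card; apply/subsetP => B; rewrite !inE => /andP[-> HB] /=.
  by rewrite leq_eqVlt ltnS orbC in HB.
by apply: leq_trans (leq_card_setU _ _) _; rewrite cards_draws leq_add2r.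
Qed.

(* A configuration is determined by its [+1] sites inside [S] and outside [S]. *)
Lemma card_config_few_plus_le n (S : {set vert n}) k :
  #|[set s : config n | #|[set u in S | s u]| <= k]| <=
    (\sum_(j < k.+1) 'C(#|S|, j)) * 2 ^ #|~: S|.
Proof.
pose f (s : config n) := ([set u in S | s u], [set u in ~: S | s u]).
have f_inj : injective f.
  move=> s1 s2 [/setP H1 /setP H2]; apply/ffunP => u.
  by case: (boolP (u \in S)) => Hu; [move: (H1 u) | move: (H2 u)]; rewrite !inE Hu.
rewrite -(card_imset _ f_inj).
apply: leq_trans (_ : #|setX [set B : {set vert n} | (B \subset S) && (#|B| <= k)]
                             (powerset (~: S))| <= _).
  apply: subset_leq_card; apply/subsetP => _ /imsetP [s Hs ->].
  rewrite !inE in Hs *; rewrite Hs andbT.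
  by apply/andP; split; apply/subsetP => u; rewrite inE => /andP[].
by rewrite cardsX card_powerset leq_mul // card_small_subsets_le.
Qed.

Lemma card_config n : #|{: config n}| = 2 ^ (n * n).
Proof. by rewrite card_ffun card_bool card_prod card_ord. Qed.

(** * The probability of the event A *)

Local Open Scope R_scope.

(* [tauN tt w] is the integer [tau * N]; [Z.to_nat] loses nothing as [tt >= 0]. *)
Definition tauN (tt : R) (w : nat) : nat := Z.to_nat (Rceil (tt * INR (Nsize w))).

Lemma Rceil_bounds x : x <= IZR (Rceil x) < x + 1.
Proof. by rewrite /Rceil opp_IZR; have [] := base_Int_part (- x); lra. Qed.

Lemma Nsize_gt0 w : (0 < Nsize w)%N.
Proof. by rewrite /Nsize expn_gt0 addn1. Qed.

Lemma INR_tauN tt w : 0 <= tt -> INR (tauN tt w) = IZR (Rceil (tt * INR (Nsize w))).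
Proof.
move=> Htt; have HN := pos_INR (Nsize w).
have [Hc _] := Rceil_bounds (tt * INR (Nsize w)).
by rewrite /tauN INR_IZR_INZ Z2Nat.id //; apply: le_IZR; nra.
Qed.

Lemma tau_Nsize tt w : tau tt w * INR (Nsize w) = IZR (Rceil (tt * INR (Nsize w))).
Proof.
have HN : 0 < INR (Nsize w) by apply: lt_0_INR; apply/ltP; exact: Nsize_gt0.
by rewrite /tau; field; lra.
Qed.

(* The agent at [v] counts as [+1]; the other agents of [nbhd w v] must supply the rest. *)
Lemma unhappy_card_le n w tt (v : vert n) (s : config n) : 0 <= tt -> (2 * w + 1 <= n)%N ->
  ~~ happy_plus w tt s v -> (#|[set u in nbhd w v :\ v | s u]| <= tauN tt w - 2)%N.
Proof.
move=> Htt Hn; rewrite /happy_plus /Rle_b; case: Rle_dec => // /Rnot_le_lt H _.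
suff : (#|[set u in nbhd w v :\ v | s u]|.+1 < tauN tt w)%N by lia.
apply/ltP/INR_lt; rewrite INR_tauN // -tau_Nsize -(card_nbhd v Hn).
apply: Rle_lt_trans H; right; congr INR.
have -> : [set u in nbhd w v | (u == v) || s u] = v |: [set u in nbhd w v :\ v | s u].
  apply/setP => u; rewrite !inE; case: (eqVneq u v) => [->|] //=.
  by have := mem_nbhd_self w v; rewrite inE => ->.
by rewrite cardsU1 !inE eqxx.
Qed.

Lemma card_notA_le n w tt (v0 : vert n) : 0 <= tt -> (2 * w + 1 <= n)%N ->
  (#|[set s : config n | ~~ eventA w tt v0 s]| <=
   #|[set v : vert n | Rle_b (INR (tdist v v0)) (Rrad tt w)]| *
     ((\sum_(j < (tauN tt w - 2).+1) 'C((Nsize w).-1, j)) * 2 ^ (n * n - (Nsize w).-1)))%N.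
Proof.
move=> Htt Hn; set VR := [set v : vert n | _].
apply: leq_trans (_ : #|\bigcup_(v in VR) [set s : config n | ~~ happy_plus w tt s v]| <= _)%N.
  apply: subset_leq_card; apply/subsetP => s; rewrite inE => /forallPn [v].
  by rewrite negb_imply => /andP [Hv Hs]; apply/bigcupP; exists v; rewrite inE.
apply: leq_trans (card_bigcup_le _ _) _; rewrite -sum_nat_const; apply: leq_sum => v _.
set S := nbhd w v :\ v.
have HS : #|S| = (Nsize w).-1.
  by have := cardsD1 v (nbhd w v); rewrite card_nbhd // mem_nbhd_self => ->.
have HCS : #|~: S| = (n * n - (Nsize w).-1)%N.
  by rewrite cardsCs setCK card_prod card_ord HS.
apply: leq_trans (_ : #|[set s : config n | #|[set u in S | s u]| <= tauN tt w - 2]| <= _)%N.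
  by apply: subset_leq_card; apply/subsetP => s; rewrite !inE; exact: unhappy_card_le.
rewrite -HCS -HS; exact: card_config_few_plus_le.
Qed.

Lemma card_radius_ball_le n (v0 : vert n) (r : R) : 0 <= r ->
  INR #|[set v : vert n | Rle_b (INR (tdist v v0)) r]| <= (2 * r + 3) ^ 2.
Proof.
move=> Hr; have [Hup1 Hup2] := archimed r.
have Hup : (0 <= up r)%Z by apply: le_IZR; lra.
set rn := Z.to_nat (up r).
have Hrn : INR rn = IZR (up r) by rewrite /rn INR_IZR_INZ Z2Nat.id.
apply: (Rle_trans _ (INR ((2 * rn + 1) * (2 * rn + 1))%N)).
  apply/le_INR/leP; apply: leq_trans (card_tball_le v0 rn).
  apply: subset_leq_card; apply/subsetP => v; rewrite !inE /Rle_b.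
  case: Rle_dec => // Hv _.
  have : IZR (Z.of_nat (tdist v v0)) < IZR (up r) by rewrite -INR_IZR_INZ; lra.
  by move/lt_IZR; rewrite /rn; lia.
rewrite !mult_INR !plus_INR Hrn /=; nra.
Qed.

Lemma INR_exp2n m : INR (2 ^ m)%N = 2 ^ m.
Proof. by elim: m => [|m IH]; rewrite ?expn0 // expnS -multE mult_INR IH. Qed.

Lemma probA_complement n w tt (v0 : vert n) :
  1 - probA w tt v0 = INR #|[set s : config n | ~~ eventA w tt v0 s]| / 2 ^ (n * n).
Proof.
have HA := cardsC [set s : config n | eventA w tt v0 s].
have HC : ~: [set s : config n | eventA w tt v0 s] = [set s | ~~ eventA w tt v0 s].
  by apply/setP => s; rewrite !inE.
rewrite HC card_config in HA.
have HP : 0 < 2 ^ (n * n) by apply: pow_lt; lra.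
have Hsum : INR #|[set s | eventA w tt v0 s]| + INR #|[set s | ~~ eventA w tt v0 s]| = 2 ^ (n * n).
  by rewrite -plus_INR plusE HA INR_exp2n.
rewrite /probA card_config INR_exp2n -Hsum; rewrite -Hsum in HP.
move: HP; set a := INR #|_|; set b := INR #|_| => HP; field; lra.
Qed.

Lemma probA_complement_le n w tt (v0 : vert n) : 0 <= tt -> (2 * w + 1 <= n)%N ->
  1 - probA w tt v0 <= (2 * Rrad tt w + 3) ^ 2 *
    INR (\sum_(j < (tauN tt w - 2).+1) 'C((Nsize w).-1, j)) / 2 ^ (Nsize w).-1.
Proof.
move=> Htt Hn; rewrite probA_complement.
set m := (Nsize w).-1; set Sg := INR (\sum_(j < _) _).
have Hmn : (m <= n * n)%N.
  have : (Nsize w <= n * n)%N by rewrite /Nsize expnS expn1; exact: leq_mul.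
  rewrite /m; lia.
have Hpow : 2 ^ (n * n) = 2 ^ (n * n - m) * 2 ^ m by rewrite -pow_add; congr pow; lia.
have Hp1 : 0 < 2 ^ (n * n - m) by apply: pow_lt; lra.
have Hp2 : 0 < 2 ^ m by apply: pow_lt; lra.
have HR : 0 <= Rrad tt w by apply: Rlt_le; apply: exp_pos.
have := le_INR _ _ (leP (card_notA_le v0 Htt Hn)).
rewrite !mult_INR INR_exp2n -/m -/Sg => Hnot.
have HVR := card_radius_ball_le v0 HR.
have HP : 0 < 2 ^ (n * n) by apply: pow_lt; lra.
apply: (Rmult_le_reg_r (2 ^ (n * n))) => //.
rewrite {3}Hpow; have -> : INR #|[set s | ~~ eventA w tt v0 s]| / 2 ^ (n * n) * 2 ^ (n * n) =
  INR #|[set s | ~~ eventA w tt v0 s]| by field; lra.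
apply: (Rle_trans _ _ _ Hnot).
have -> : (2 * Rrad tt w + 3) ^ 2 * Sg / 2 ^ m * (2 ^ (n * n - m) * 2 ^ m) =
  (2 * Rrad tt w + 3) ^ 2 * (Sg * 2 ^ (n * n - m)) by field; lra.
apply: Rmult_le_compat_r => //; apply: Rmult_le_pos; [exact: pos_INR | lra].
Qed.

Lemma INR_predn n : (0 < n)%N -> INR n.-1 = INR n - 1.
Proof. by case: n => // n _; rewrite S_INR /=; ring. Qed.

Lemma Rrad_radius tt w : 0 <= tt -> (2 <= tauN tt w)%N ->
  Rrad tt w = radius (tauN tt w - 2) (Nsize w).-1.
Proof.
move=> Htt H2; have HN := Nsize_gt0 w.
rewrite /Rrad /radius /tau' prednK // tau_Nsize -INR_tauN //.
rewrite minus_INR; last exact/leP.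
by rewrite INR_predn.
Qed.

Lemma tauN_sub2_bounds tt w : 0 <= tt <= 1 ->
  tt * INR (Nsize w) - 2 <= INR (tauN tt w - 2) <= tt * INR (Nsize w).-1.
Proof.
move=> Htt; have HN := Nsize_gt0 w.
have HNm := INR_predn HN.
have HN1 : 1 <= INR (Nsize w) by apply: (le_INR 1); apply/leP.
have [Hlo Hhi] := Rceil_bounds (tt * INR (Nsize w)).
rewrite -INR_tauN ?HNm in Hlo Hhi *; try lra.
case: (leqP 2 (tauN tt w)) => H2.
  by rewrite minus_INR; [simpl; split; nra | exact/leP].
have -> : (tauN tt w - 2 = 0)%N by lia.
have : INR (tauN tt w) <= 1 by apply: (le_INR _ 1); apply/leP; lia.
simpl; split; nra.
Qed.

Lemma mul_sqrt_inv_le c eps x : 0 < c -> 0 < eps ->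
  2 * (c * c) / (eps * eps) <= x -> c * sqrt (2 / x) <= eps.
Proof.
move=> Hc Heps Hcx.
have Hx : 0 < x by apply: (Rlt_le_trans _ _ _ _ Hcx); apply: Rdiv_lt_0_compat; nra.
have Hc2 : 2 * (c * c) <= x * (eps * eps).
  have -> : 2 * (c * c) = 2 * (c * c) / (eps * eps) * (eps * eps) by field; lra.
  by apply: Rmult_le_compat_r => //; nra.
rewrite -(sqrt_square c); last lra.
rewrite -sqrt_mult; [|nra|apply: Rdiv_le_0_compat; lra].
rewrite -(sqrt_square eps); last lra.
apply: sqrt_le_1_alt; apply: (Rmult_le_reg_r x) => //.
have -> : c * c * (2 / x) * x = 2 * (c * c) by field; lra.
lra.
Qed.

Theorem lemmaA4 :
  forall tt : R, 0 < tt < 1 / 2 ->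
  forall eps : R, 0 < eps ->
  exists W : nat, forall w n : nat, leq W w -> leq (2 * w + 1)%N n ->
  forall v0 : vert n, 1 - eps <= @probA n w tt v0.
Proof.
move=> tt Htt eps Heps.
have Htt2 : 0 < tt < / 2 by lra.
set c := 34 * (1 - tt) / (1 - 2 * tt).
have Hc : 0 < c by apply: Rdiv_lt_0_compat; lra.
set K := 2 * (c * c) / (eps * eps).
have HK : 0 <= K by apply: Rdiv_le_0_compat; nra.
have [W HW] := INR_unbounded ((K + 3) / tt).
exists W => w n HWw Hn v0.
have HwN : INR W <= INR (Nsize w).
  by apply/le_INR/leP; apply: leq_trans HWw _; rewrite /Nsize expnS expn1; nia.
have Htt1 : 0 <= tt <= 1 by lra.
have [Hlo Hhi] := tauN_sub2_bounds w Htt1.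
have HKk1 : K + 1 <= INR (tauN tt w - 2).
  have : (K + 3) / tt * tt = K + 3 by field; lra.
  nra.
have HKk : K <= INR (tauN tt w - 2) by lra.
have Hk1 : (1 <= tauN tt w - 2)%N by apply/leP/(INR_le 1); simpl; lra.
have := probA_complement_le v0 (Rlt_le _ _ (proj1 Htt)) Hn.
rewrite Rrad_radius; [|lra|lia].
have := radius_binomial_tail_le Htt2 Hk1 Hhi.
have := mul_sqrt_inv_le Hc Heps HKk.
rewrite -/c; lra.
Qed.
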